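(* Let $(H,k,\chi)$ be an instance of Precoloring Extension with $H=(\{1,\dots,n\},F)$ having at least one edge and $\chi:V_0\to\{1,\dots,k\}$. Let $X=nk+1$; let $u_j=\chi(j)$, $\ell_j=\chi(j)$ for $j\in V_0$ and $u_j=k$, $\ell_j=1$ for $j\notin V_0$. Construct a $P_n\,|\,\mathrm{conc}\,|\,\sum C_j$ instance: jobs $1,\dots,n$ with $p_j=1$ and conflict graph initially $H$; for each $j\in\{1,\dots,n\}$, jobs $j(1),\dots,j(X)$ with processing time $X-u_j$, each in conflict with $j$, and for each $i\in\{1,\dots,X\}$ jobs $j(i,1),\dots,j(i,X)$ with processing time $u_j$, each in conflict with $j(i)$; for each $j\in V_0$ with $\chi(j)>1$, jobs $j^*(1),\dots,j^*(X)$ with processing time $\ell_j-1$, each in conflict with $j$ only. Let $K=\sum_{j=1}^n\big[(1+u_j)X^2+(\ell_j-1)X\big]+nk$. If the constructed instance has a minimal feasible schedule $C$ with $\sum_j C_j\le K$, then $(H,k,\chi)$ has a solution $\chi':\{1,\dots,n\}\to\{1,\dots,k\}$.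
   Context: Precoloring Extension: given a graph $H=(V,F)$, an integer $k$, and a proper coloring $\chi:V_0\to\{1,\dots,k\}$ of $H[V_0]$ for some $V_0\subseteq V$, a solution is a proper coloring $\chi':V\to\{1,\dots,k\}$ of $H$ with $\chi'(v)=\chi(v)$ for all $v\in V_0$. In $P_n\,|\,\mathrm{conc}\,|\,\sum C_j$, each job $j$ has integer processing time $p_j\ge1$ and release time $0$, and there is a conflict graph $G$ (the edges listed); a schedule assigning completion times $C_j\in\mathbb{N}$ is feasible if $C_j-p_j\ge0$ for all $j$ and $[C_i-p_i,C_i)\cap[C_j-p_j,C_j)=\emptyset$ for all conflicting pairs $\{i,j\}$; $\sum_j C_j$ is over all jobs. A feasible schedule is minimal if decreasing the completion time of any job by any positive amount makes it infeasible. *)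

From mathcomp Require Import all_boot.
Set Implicit Arguments. Unset Strict Implicit. Unset Printing Implicit Defensive.

(* Graph H on vertex set 'I_n (vertex v : 'I_n stands for vertex v+1 of the paper),
   given by a symmetric irreflexive relation e. Colours are naturals in 1..k. *)

Definition simple_graph n (e : rel 'I_n) : Prop := symmetric e /\ irreflexive e.

(* chi : V0 -> {1..k} is a proper colouring of H[V0] (values outside V0 ignored) *)
Definition precoloring n (k : nat) (e : rel 'I_n) (V0 : {set 'I_n})
    (chi : 'I_n -> nat) : Prop :=
  (forall v, v \in V0 -> 1 <= chi v <= k) /\
  (forall v w, v \in V0 -> w \in V0 -> e v w -> chi v != chi w).

Definition pe_solution n (k : nat) (e : rel 'I_n) (V0 : {set 'I_n})
    (chi chi' : 'I_n -> nat) : Prop :=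
  (forall v, 1 <= chi' v <= k) /\
  (forall v w, e v w -> chi' v != chi' w) /\
  (forall v, v \in V0 -> chi' v = chi v).

Section Construction.
Variables (n k : nat) (e : rel 'I_n) (V0 : {set 'I_n}) (chi : 'I_n -> nat).

Definition X := n * k + 1.
Definition uu (j : 'I_n) := if j \in V0 then chi j else k.
Definition ll (j : 'I_n) := if j \in V0 then chi j else 1.
Definition has_star (j : 'I_n) := (j \in V0) && (1 < chi j).

(* Jobs: Base j = job j;  Aux j i = j(i+1);  Aux2 j i i' = j(i+1,i'+1);
   Star j i = j^*(i+1).  Indices i, i' range over 0..X-1 (see is_job). *)
Inductive job :=
| Base of 'I_n
| Aux of 'I_n & nat
| Aux2 of 'I_n & nat & nat
| Star of 'I_n & nat.

Definition is_job (a : job) : bool :=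
  match a with
  | Base _ => true
  | Aux _ i => i < X
  | Aux2 _ i i' => (i < X) && (i' < X)
  | Star j i => has_star j && (i < X)
  end.

Definition ptime (a : job) : nat :=
  match a with
  | Base _ => 1
  | Aux j _ => X - uu j
  | Aux2 j _ _ => uu j
  | Star j _ => ll j - 1
  end.

Definition conflict0 (a b : job) : bool :=
  match a, b with
  | Base i, Base j => e i j
  | Base j, Aux j' _ => j == j'
  | Aux j i, Aux2 j' i' _ => (j == j') && (i == i')
  | Base j, Star j' _ => j == j'
  | _, _ => false
  end.

Definition conflict (a b : job) : bool := conflict0 a b || conflict0 b a.

(* completion times C : job -> nat; only values at actual jobs matter *)
Definition feasible (C : job -> nat) : Prop :=
  (forall a, is_job a -> ptime a <= C a) /\
  (forall a b, is_job a -> is_job b -> conflict a b ->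
     forall t, ~ ((C a - ptime a <= t < C a) /\ (C b - ptime b <= t < C b))).

(* Decreasing C a by d > 0 (with d <= C a, so that it stays in N) breaks feasibility. *)
Definition minimal_schedule (C : job -> nat) : Prop :=
  feasible C /\
  forall a, is_job a -> forall d, 0 < d <= C a ->
  forall C' : job -> nat, C' a = C a - d ->
    (forall b, is_job b -> b <> a -> C' b = C b) -> ~ feasible C'.

Definition total_completion (C : job -> nat) : nat :=
  \sum_(j < n)
     (C (Base j)
      + \sum_(i < X) (C (Aux j i) + \sum_(i' < X) C (Aux2 j i i'))
      + \sum_(i < X | has_star j) C (Star j i)).

Definition bound_K : nat :=
  \sum_(j < n) ((1 + uu j) * X ^ 2 + (ll j - 1) * X) + n * k.

End Construction.

From mathcomp Require Import all_boot zify.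

Set Implicit Arguments.
Unset Strict Implicit.
Unset Printing Implicit Defensive.

(* Read the colour of vertex j off the completion time of its unit job j.
   The gadget of j costs at least (1 + u_j) X^2 + (l_j - 1) X + 1 in any
   feasible schedule, and X more whenever C_j lies outside [l_j, u_j]: if
   C_j > u_j, each long job j(i) must wait until C_j and then delays its X
   children j(i, .); if C_j < l_j, each of the X jobs j^*(i) must wait until
   C_j.  Since X = nk + 1 exceeds the slack nk - n of the budget K, every C_j
   lies in its window, so the C_j form a colouring extending chi, proper
   because adjacent unit jobs cannot finish at the same time. *)

Lemma sum_ord_ge_const m q (f : 'I_m -> nat) :
  (forall i, q <= f i) -> m * q <= \sum_(i < m) f i.
Proof.
move=> le_qf; have : \sum_(i < m) q <= \sum_(i < m) f i by apply: leq_sum.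
by rewrite sum_nat_const card_ord.
Qed.

Lemma nonoverlapping_jobs p1 c1 p2 c2 :
  0 < p1 <= c1 -> 0 < p2 <= c2 ->
  (forall t, ~ ((c1 - p1 <= t < c1) /\ (c2 - p2 <= t < c2))) ->
  c1 <= c2 - p2 \/ c2 <= c1 - p1.
Proof.
move=> h1 h2 no_common_t; case: (leqP c1 (c2 - p2)) => [|lt1]; first by left.
case: (leqP c2 (c1 - p1)) => [|lt2]; first by right.
by case: (no_common_t (maxn (c1 - p1) (c2 - p2))); split; lia.
Qed.

Section Gadget.

Variables (n k : nat) (e : rel 'I_n) (V0 : {set 'I_n}) (chi : 'I_n -> nat).
Variable C : job n -> nat.

Local Notation XX := (X n k).
Local Notation u := (uu k V0 chi).
Local Notation l := (ll V0 chi).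
Local Notation p := (ptime k V0 chi).
Local Notation is_job := (is_job k V0 chi).

Definition gadget_base (j : 'I_n) := (1 + u j) * XX ^ 2 + (l j - 1) * XX.

Definition gadget_cost (j : 'I_n) :=
  C (Base j)
  + \sum_(i < XX) (C (Aux j i) + \sum_(i' < XX) C (Aux2 j i i'))
  + \sum_(i < XX | has_star V0 chi j) C (Star j i).

Lemma total_completionE :
  total_completion k V0 chi C = \sum_(j < n) gadget_cost j.
Proof. by []. Qed.

Lemma bound_KE : bound_K k V0 chi = \sum_(j < n) gadget_base j + n * k.
Proof. by []. Qed.

Hypothesis precol : precoloring k e V0 chi.

Lemma uu_le_k j : u j <= k.
Proof. by rewrite /uu; case: ifP => // /precol.1; lia. Qed.

Lemma ll_gt0 j : 0 < l j.
Proof. by rewrite /ll; case: ifP => // /precol.1; lia. Qed.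

Lemma uu_lt_X (j : 'I_n) : u j < XX.
Proof. by have := uu_le_k j; have := ltn_ord j; rewrite /X; nia. Qed.

Hypothesis feas : feasible k e V0 chi C.

Lemma conflict_nonoverlap a b :
  is_job a -> is_job b -> conflict e a b -> 0 < p a -> 0 < p b ->
  C a <= C b - p b \/ C b <= C a - p a.
Proof.
move=> ja jb ab pa pb; apply: nonoverlapping_jobs (feas.2 a b ja jb ab).
- by rewrite pa (feas.1 a ja).
- by rewrite pb (feas.1 b jb).
Qed.

Lemma base_conflict_neq v w : e v w -> C (Base v) != C (Base w).
Proof.
move=> evw; apply/eqP => same; have := feas.1 (Base v) isT.
have := @conflict_nonoverlap (Base v) (Base w); rewrite /conflict /= evw.
by case=> //=; lia.
Qed.

(* For C_j in (u_j, X] the long job j(i) cannot precede job j, so it ends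
   after X; for C_j > X the excess is paid by job j itself. *)
Lemma aux_family_ge j (i : 'I_XX) :
  XX * (1 + u j) + ((u j < C (Base j)) && (C (Base j) <= XX))
    <= C (Aux j i) + \sum_(i' < XX) C (Aux2 j i i').
Proof.
have ltuX := uu_lt_X j.
have aux_ge : XX - u j <= C (Aux j i) := feas.1 (Aux j i) (ltn_ord i).
have aux2_ge (i' : 'I_XX) : u j <= C (Aux2 j i i').
  by apply: (feas.1 (Aux2 j i i')); rewrite /= !ltn_ord.
have base_sep : C (Aux j i) <= C (Base j) - 1
                \/ C (Base j) <= C (Aux j i) - (XX - u j).
  apply: (@conflict_nonoverlap (Aux j i) (Base j)) => //=.
    by rewrite /conflict /= eqxx.
  by rewrite subn_gt0.
have aux2_sep (i' : 'I_XX) : 0 < u j ->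
    C (Aux j i) <= C (Aux2 j i i') - u j
    \/ C (Aux2 j i i') <= C (Aux j i) - (XX - u j).
  move=> u_gt0; apply: (@conflict_nonoverlap (Aux j i) (Aux2 j i i')) => //=.
  - by rewrite !ltn_ord.
  - by rewrite /conflict /= !eqxx.
  - by rewrite subn_gt0.
case: (leqP XX (C (Aux j i))) => [geXc | ltcX].
  have := sum_ord_ge_const aux2_ge.
  case: andP => [[? ?] | _]; case: base_sep; lia.
have u_gt0 : 0 < u j by lia.
have : XX * XX <= \sum_(i' < XX) C (Aux2 j i i').
  apply: sum_ord_ge_const => i'.
  by have := aux2_ge i'; case: (aux2_sep i' u_gt0); lia.
by case: (_ && _); nia.
Qed.

Lemma star_family_ge j :
  XX * (l j - 1 + (C (Base j) < l j))
    <= \sum_(i < XX | has_star V0 chi j) C (Star j i).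
Proof.
have base_gt0 : 0 < C (Base j) := feas.1 (Base j) isT.
case star: (has_star V0 chi j); last first.
  have : l j <= 1.
    by move: star; rewrite /has_star /ll; case: (j \in V0) => //= /negbT; lia.
  rewrite big_pred0 // => l_le1.
  have -> : l j - 1 + (C (Base j) < l j) = 0 by lia.
  by rewrite muln0.
have [jV0 chi_gt1] := andP star.
have l_gt1 : 1 < l j by rewrite /ll jV0.
apply: sum_ord_ge_const => i.
have job_star : is_job (Star j i) by rewrite /= star ltn_ord.
have := feas.1 _ job_star; rewrite /= => star_ge.
have := @conflict_nonoverlap (Base j) (Star j i) isT job_star.
rewrite /conflict /= eqxx /= subn_gt0 => /(_ isT isT l_gt1).
by case: ltnP => /=; lia.
Qed.

Lemma gadget_cost_ge j :
  gadget_base j + (1 + if l j <= C (Base j) <= u j then 0 else XX)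
    <= gadget_cost j.
Proof.
have base_gt0 : 0 < C (Base j) := feas.1 (Base j) isT.
have auxs := sum_ord_ge_const (aux_family_ge j).
have stars := star_family_ge j.
rewrite /gadget_base /gadget_cost.
case: (leqP (l j) (C (Base j))); case: (leqP (C (Base j)) (u j));
  case: (leqP (C (Base j)) XX); rewrite /= in auxs stars *; lia.
Qed.

Lemma base_in_window :
  total_completion k V0 chi C <= bound_K k V0 chi ->
  forall j, l j <= C (Base j) <= u j.
Proof.
move=> le_K j0; apply/negPn/negP => out.
have := leq_sum (index_enum 'I_n) (fun j (_ : true) => gadget_cost_ge j).
rewrite -total_completionE big_split [\sum_(j < n) (1 + _)]big_split.
rewrite sum_nat_const card_ord muln1.
rewrite [\sum_(j < n) (if _ then _ else _)](bigD1 j0) //= (negbTE out).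
move: le_K; rewrite bound_KE /X.
set base := \sum_(j < n) gadget_base j; set others := \sum_(j < n | j != j0) _.
lia.
Qed.

End Gadget.

Theorem lemma14 (n k : nat) (e : rel 'I_n) (V0 : {set 'I_n}) (chi : 'I_n -> nat) :
  simple_graph e ->
  (exists v w, e v w) ->
  precoloring k e V0 chi ->
  (exists C : job n -> nat,
      minimal_schedule k e V0 chi C /\
      total_completion k V0 chi C <= bound_K k V0 chi) ->
  exists chi' : 'I_n -> nat, pe_solution k e V0 chi chi'.
Proof.
move=> _ _ precol [C [[feas _] le_K]].
have window := base_in_window precol feas le_K.
exists (fun v => C (Base v)); split; [|split] => [v|v w|v vV] /=.
- by have := window v; have := ll_gt0 precol v; have := uu_le_k precol v; lia.
- exact: (base_conflict_neq feas).
- by have := window v; rewrite /ll /uu vV; lia.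
Qed.
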